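(* Let $r\ge1$ and $$\Psi(x^{-1},\hbar):=\sum_{n\ge0}\frac{x^{-rn}}{n!\,\hbar^n r^n}\prod_{j=1}^{rn-1}(1+j\hbar),$$ a formal power series in $x^{-1}$ (the principal specialization of the strictly monotone orbifold Hurwitz generating function). Then $$\Big[\hat x^{1/\hbar}\big(\hat y^r-\hat x\hat y+1\big)\hat x^{-1/\hbar}\Big]\Psi(x^{-1},\hbar)=0,\qquad\hat x=x\cdot,\ \hat y=-\hbar\frac{\partial}{\partial x},$$ equivalently $\big[(-\hbar\partial_x)^r+\hbar x\partial_x+1\big]\big(x^{-1/\hbar}\Psi\big)=0$ after multiplication by $x^{1/\hbar}$, i.e. $\big[(x^{-1}-\hbar\partial_x)^r+\hbar x\partial_x\big]\Psi=0$.
   Context: The empty product (for $n=0$ and, when $r=1$, for $n=1$) equals $1$. Conjugation by $x^{\pm1/\hbar}$ is understood formally: $x^{1/\hbar}\partial_x x^{-1/\hbar}=\partial_x-\frac{1}{\hbar x}$. *)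

From HB Require Import structures.
From mathcomp Require Import all_boot all_order all_algebra fraction.
Set Implicit Arguments. Unset Strict Implicit. Unset Printing Implicit Defensive.
Import Order.TTheory GRing.Theory Num.Theory.
Local Open Scope ring_scope.

Definition Qh : fieldType := {fraction {poly rat}}.
Definition hbar : Qh := @FracField.tofrac {poly rat} 'X.

(* Two-sided formal series in x: f k = coefficient of x^k (k : int).
   Shifts and derivative are coefficientwise well defined. *)
Definition xseries := int -> Qh.

Definition xs_mulX (f : xseries) : xseries := fun k => f (k - 1).
Definition xs_mulXinv (f : xseries) : xseries := fun k => f (k + 1).
Definition xs_deriv (f : xseries) : xseries := fun k => (k + 1)%:~R * f (k + 1).

Definition psi_coef (r n : nat) : Qh :=
  (n`!%:R * hbar ^+ n * (r ^ n)%:R)^-1 *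
  \prod_(1 <= j < r * n) (1 + j%:R * hbar).

(* Psi_series(x^{-1}, hbar) = sum_n psi_coef r n x^{-rn}, as an x-series *)
Definition Psi_series (r : nat) : xseries := fun k =>
  if (k <= 0) && (r %| `|k|)%N then psi_coef r (`|k| %/ r)%N else 0.

Definition xs_Yop (f : xseries) : xseries := fun k => xs_mulXinv f k - hbar * xs_deriv f k.

(* The operator x^{-1} - hbar d/dx sends x^k to (1 - hbar (k + 1)) x^{k-1}, so its
   r-th power acts on coefficients as a shift by r times a product of r weights.
   At x^{-r(n+1)} these weights are exactly the factors 1 + j hbar, r n <= j < r(n+1),
   by which the product in psi_coef r (n + 1) exceeds the one in psi_coef r n; the
   remaining ratio hbar r (n + 1) is what the Euler operator hbar x d/dx contributes.
   Hence the two terms cancel coefficientwise, by the recursion for psi_coef. *)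

From mathcomp Require Import all_boot all_order all_algebra fraction.
From mathcomp Require Import ring zify.
Import GRing.Theory Num.Theory.
Local Open Scope ring_scope.

Lemma Qh_natr_eq0 (n : nat) : ((n%:R : Qh) == 0) = (n == 0%N).
Proof.
have -> : (n%:R : Qh) = FracField.tofrac (n%:R : {poly rat}) by rewrite rmorph_nat.
by rewrite tofrac_eq0 -polyC_natr polyC_eq0 pnatr_eq0.
Qed.

Lemma hbar_neq0 : hbar != 0.
Proof. by rewrite tofrac_eq0 polyX_eq0. Qed.

Section ShiftScale.
Context {R : pzSemiRingType} {a : int -> R} {T : (int -> R) -> int -> R}.
Hypothesis TE : forall f k, T f k = a k * f (k + 1).

Lemma iter_shift_scale (n : nat) (f : int -> R) (k : int) :
  iter n T f k = (\prod_(i < n) a (k + i%:Z)) * f (k + n%:Z).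
Proof.
elim: n k => [|n IHn] k /=; first by rewrite big_ord0 mul1r addr0.
rewrite TE IHn big_ord_recl addr0 mulrA; congr (_ * _ * f _); last by lia.
by apply: eq_bigr => i _; rewrite lift0; congr (a _); lia.
Qed.
End ShiftScale.

Lemma big_nat_from1 (R : pzSemiRingType) (F : nat -> R) (n : nat) :
  F 0%N = 1 -> \prod_(1 <= j < n) F j = \prod_(0 <= j < n) F j.
Proof.
move=> F0; case: n => [|n]; first by rewrite !big_geq.
by rewrite [RHS]big_ltn // F0 mul1r.
Qed.

Lemma xs_YopE (f : xseries) (k : int) :
  xs_Yop f k = (1 - hbar * (k + 1)%:~R) * f (k + 1).
Proof. by rewrite /xs_Yop /xs_mulXinv /xs_deriv; ring. Qed.

Lemma xs_mulX_derivE (f : xseries) (k : int) :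
  xs_mulX (xs_deriv f) k = k%:~R * f k.
Proof. by rewrite /xs_mulX /xs_deriv subrK. Qed.

Lemma prod_xs_Yop_weights (r m : nat) :
  \prod_(i < r) (1 - hbar * (- (r * m.+1)%N%:Z + i%:Z + 1)%:~R)
  = \prod_(r * m <= j < r * m.+1) (1 + j%:R * hbar).
Proof.
rewrite -(add0n (r * m)%N) big_addn mulnS addnK big_mkord.
rewrite (reindex_inj rev_ord_inj); apply: eq_bigr => i _ /=.
have ltir := ltn_ord i.
rewrite (_ : _ + _ + 1 = - (i + r * m)%N%:Z); last by lia.
by rewrite mulrNz mulrN opprK mulrC.
Qed.

Lemma psi_coefS (r m : nat) : (0 < r)%N ->
  psi_coef r m.+1 * (hbar * (r * m.+1)%:R)
  = psi_coef r m * \prod_(r * m <= j < r * m.+1) (1 + j%:R * hbar).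
Proof.
move=> r_gt0; rewrite /psi_coef !big_nat_from1 ?mul0r ?addr0 //.
rewrite (@big_cat_nat _ _ _ (r * m) 0 (r * m.+1)) ?leq_mul //=.
move: (\prod_(0 <= j < r * m) _) (\prod_(r * m <= j < _) _) hbar_neq0 => A B.
(* Abstracting hbar keeps unification from computing with its value in Qh. *)
move: hbar => h h_neq0.
rewrite factS expnS exprS !natrM.
set X := m`!%:R * h ^+ m * (r ^ m)%:R; set Y := h * (r%:R * m.+1%:R).
have Y_neq0 : Y != 0 by rewrite !mulf_neq0 ?Qh_natr_eq0 -?lt0n.
rewrite (_ : _ * _ * _ * _ = X * Y); last by rewrite /X /Y; ring.
by rewrite invfM -!mulrA; congr (_ * _); rewrite mulrC mulrA mulfK.
Qed.

Lemma Psi_series_mulN (r m : nat) : (0 < r)%N ->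
  Psi_series r (- (r * m)%N%:Z) = psi_coef r m.
Proof.
move=> r_gt0; rewrite /Psi_series abszN absz_nat dvdn_mulr // mulKn //.
by rewrite oppr_le0.
Qed.

Lemma Psi_series_neq0 (r : nat) (k : int) :
  Psi_series r k != 0 -> exists m, k = - (r * m)%N%:Z.
Proof.
rewrite /Psi_series; case: ifP => [/andP[k_le0 r_dvd_k] _|]; last by rewrite eqxx.
by exists (`|k| %/ r)%N; rewrite mulnC divnK //; lia.
Qed.

Lemma Psi_series_recurrence (r m : nat) : (0 < r)%N ->
  let k := - (r * m.+1)%N%:Z in
  iter r xs_Yop (Psi_series r) k + hbar * (k%:~R * Psi_series r k) = 0.
Proof.
move=> r_gt0 k; rewrite (iter_shift_scale xs_YopE) prod_xs_Yop_weights.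
rewrite (_ : k + r = - (r * m)%N%:Z); last by rewrite /k; lia.
rewrite !Psi_series_mulN // mulrC -psi_coefS // /k mulrNz -pmulrn.
by rewrite mulNr mulrN mulrCA [_ * psi_coef _ _]mulrC subrr.
Qed.

Theorem proposition7p1 (r : nat) (hr : (1 <= r)%N) :
  forall k : int, @ssrnat.iter xseries r xs_Yop (Psi_series r) k + hbar * xs_mulX (xs_deriv (Psi_series r)) k = 0.
Proof.
move=> k; rewrite xs_mulX_derivE.
case: (eqVneq (Psi_series r (k + r)) 0) => [Psi_kr0 | /Psi_series_neq0 [m km]]; last first.
  by rewrite (_ : k = - (r * m.+1)%N%:Z) ?Psi_series_recurrence //; lia.
case: (eqVneq (Psi_series r k) 0) => [Psi_k0 | /Psi_series_neq0 [[|m] km]].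
- by rewrite (iter_shift_scale xs_YopE) Psi_kr0 Psi_k0 !mulr0 addr0.
- by rewrite (iter_shift_scale xs_YopE) Psi_kr0 km muln0 mulr0z mul0r !mulr0 addr0.
- by rewrite km Psi_series_recurrence.
Qed.
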